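(* Let $p$ be a prime, $e\ge1$, $q=p^e$, $0\le\ell\le e-1$, $m\ge n$, and let $\varphi_1,\dots,\varphi_m\in\mathbb{F}_q^n$ span $\mathbb{F}_q^n$. Let $\Phi$ be the $n\times m$ matrix with columns $\varphi_1,\dots,\varphi_m$, and for an integer $k\ge0$ let $\Phi^{\dagger_k}=\sigma_k(\Phi)^t$. Let $c\in\mathbb{F}_q$. Then the following are equivalent: (1) $\Phi\Phi^{\dagger_\ell}=cI_n$ (i.e. $\{\varphi_i\}$ is an $\ell$-Galois $c$-tight frame); (2) $G^2=cG$, where $G=\Phi^{\dagger_\ell}\Phi=\big((\varphi_i,\varphi_j)_\ell\big)_{i,j\in[m]}$ is the $\ell$-Galois Gram matrix; (3) $(\Phi^{\dagger_{e-\ell}}\mathbf{x},\Phi^{\dagger_\ell}\mathbf{y})_\ell=c(\mathbf{x},\mathbf{y})_\ell$ for all $\mathbf{x},\mathbf{y}\in\mathbb{F}_q^n$.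
   Context: For an integer $k\ge0$, $\sigma_k(c)=c^{p^k}$ for $c\in\mathbb{F}_q$, applied entrywise to matrices, and for vectors $\mathbf{x},\mathbf{y}$ of the same length $N$, $(\mathbf{x},\mathbf{y})_\ell=\sum_{i=1}^N x_i^{p^\ell}y_i$. $[m]=\{1,\dots,m\}$. *)

From HB Require Import structures.
From mathcomp Require Import all_boot all_order all_algebra all_field.
Set Implicit Arguments. Unset Strict Implicit. Unset Printing Implicit Defensive.
Import GRing.Theory.
Local Open Scope ring_scope.

Definition sigma (F : nzRingType) (p k : nat) (c : F) : F := c ^+ (p ^ k)%N.

Definition gdagger (F : nzRingType) (p k : nat) (r s : nat) (A : 'M[F]_(r, s))
  : 'M[F]_(s, r) := (map_mx (sigma p k) A)^T.

Definition ginner (F : nzRingType) (p l N : nat) (x y : 'cV[F]_N) : F :=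
  \sum_(i < N) sigma p l (x i 0) * y i 0.

From HB Require Import structures.
From mathcomp Require Import all_boot all_order all_algebra all_field.
Set Implicit Arguments. Unset Strict Implicit. Unset Printing Implicit Defensive.
Import GRing.Theory.
Local Open Scope ring_scope.

(** (1) <-> (2) only uses full row rank: [sigma_l] is a field automorphism, so
    [sigma_l(Phi)] has full row rank with [Phi], and [G^2 = cG], i.e.
    [Phi^† (Phi Phi^† - c) Phi = 0], lets us cancel [Phi] on the right and
    [Phi^† = sigma_l(Phi)^T] on the left.
    (1) <-> (3): as [sigma_l o sigma_(e-l)] is [x |-> x^q = x], the matrix
    [Phi^(†_(e-l))] is the adjoint of [Phi] for [( , )_l], so (3) says
    [(x, Phi Phi^† y)_l = (x, c y)_l] for all [x, y], and [( , )_l] is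
    nondegenerate. *)

Section FrobeniusPower.
Variables (R : comNzRingType) (p k : nat).
Hypothesis pcharRp : p \in [pchar R].

Lemma sigma_is_nmod_morphism : nmod_morphism (sigma p k : R -> R).
Proof.
have p_prime := pcharf_prime pcharRp.
split; first by rewrite /sigma expr0n expn_eq0 (gtn_eqF (prime_gt0 p_prime)).
move=> x y; rewrite /sigma exprDn_pchar //.
by rewrite pnatX (pnatE _ p_prime) pcharRp.
Qed.

Lemma sigma_is_monoid_morphism : monoid_morphism (sigma p k : R -> R).
Proof. by split=> [|x y]; rewrite /sigma ?expr1n ?exprMn. Qed.

End FrobeniusPower.

Lemma ginner_mxE (R : nzRingType) (p k N : nat) (x y : 'cV[R]_N) :
  ginner p k x y = ((map_mx (sigma p k) x)^T *m y) 0 0.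
Proof. by rewrite /ginner mxE; apply: eq_bigr => i _; rewrite !mxE. Qed.

Lemma ginnerZr (R : comNzRingType) (p k N : nat) (a : R) (x y : 'cV[R]_N) :
  ginner p k x (a *: y) = a * ginner p k x y.
Proof. by rewrite /ginner mulr_sumr; apply: eq_bigr => i _; rewrite mxE mulrCA. Qed.

Lemma sqr_mulmx_eq_scale_iff (F : fieldType) (n m : nat)
    (A : 'M[F]_(n, m)) (B : 'M[F]_(m, n)) (c : F) :
  row_free A -> row_free B^T ->
  (B *m A) *m (B *m A) = c *: (B *m A) <-> A *m B = c%:M.
Proof.
move=> freeA freeBt; split=> [sqrBA | AB]; last first.
  by rewrite mulmxA -(mulmxA B) AB mul_mx_scalar -scalemxAl.
have B_AB_c : B *m (A *m B - c%:M) = 0.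
  apply: (row_free_inj freeA).
  by rewrite mul0mx mulmxBr mulmxBl !mulmxA -(mulmxA _ B) sqrBA
             mul_mx_scalar -scalemxAl subrr.
apply/eqP; rewrite -subr_eq0 -trmx_eq0; apply/eqP.
apply: (row_free_inj freeBt).
by rewrite mul0mx -trmx_mul B_AB_c trmx0.
Qed.

Section GaloisInnerProduct.
Variables (F : finFieldType) (p e : nat).
Hypotheses (pcharFp : p \in [pchar F]) (cardF : #|F| = (p ^ e)%N).

HB.instance Definition _ k :=
  GRing.isNmodMorphism.Build F F (sigma p k) (sigma_is_nmod_morphism k pcharFp).
HB.instance Definition _ k :=
  GRing.isMonoidMorphism.Build F F (sigma p k) (sigma_is_monoid_morphism F p k).

Lemma ginner_deltal (k N : nat) (i : 'I_N) (y : 'cV[F]_N) :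
  ginner p k (delta_mx i 0) y = y i 0.
Proof. by rewrite ginner_mxE map_delta_mx trmx_delta -rowE mxE. Qed.

Lemma ginner_mx_inj (k r s : nat) (A B : 'M[F]_(r, s)) :
  (forall x y, ginner p k x (A *m y) = ginner p k x (B *m y)) -> A = B.
Proof.
move=> eqAB; apply/matrixP => i j.
by have := eqAB (delta_mx i 0) (delta_mx j 0); rewrite !ginner_deltal -!colE !mxE.
Qed.

Lemma row_free_trmx_gdagger (k r s : nat) (A : 'M[F]_(r, s)) :
  row_free A -> row_free (gdagger p k A)^T.
Proof. by rewrite /gdagger trmxK /row_free mxrank_map. Qed.

Section ComplementaryExponent.
Variable k : nat.
Hypothesis le_k_e : (k <= e)%N.

Lemma sigma_subK : cancel (@sigma F p (e - k)) (sigma p k).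
Proof. by move=> x; rewrite /sigma -exprM -expnD subnK // -cardF expf_card. Qed.

Lemma map_sigma_gdagger_sub (r s : nat) (A : 'M[F]_(r, s)) :
  map_mx (sigma p k) (gdagger p (e - k) A) = A^T.
Proof. by apply/matrixP => i j; rewrite !mxE sigma_subK. Qed.

Lemma ginner_gdagger_adjoint (r s : nat) (A : 'M[F]_(r, s)) x y :
  ginner p k (gdagger p (e - k) A *m x) y = ginner p k x (A *m y).
Proof.
by rewrite !ginner_mxE map_mxM map_sigma_gdagger_sub trmx_mul trmxK mulmxA.
Qed.

Lemma tight_frame_ginner_iff (n m : nat) (Phi : 'M[F]_(n, m)) (c : F) :
  (forall x y : 'cV[F]_n,
     ginner p k (gdagger p (e - k) Phi *m x) (gdagger p k Phi *m y)
     = c * ginner p k x y)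
  <-> Phi *m gdagger p k Phi = c%:M.
Proof.
split=> [tight | tightPhi x y]; last first.
  by rewrite ginner_gdagger_adjoint mulmxA tightPhi mul_scalar_mx ginnerZr.
apply: (@ginner_mx_inj k) => x y.
by rewrite -mulmxA -ginner_gdagger_adjoint tight mul_scalar_mx ginnerZr.
Qed.

End ComplementaryExponent.

End GaloisInnerProduct.

Theorem mainTheorem3 (p e l n m : nat) (F : finFieldType)
  (Hp : prime p) (He : (1 <= e)%N) (Hchar : p \in [pchar F])
  (Hcard : #|F| = (p ^ e)%N) (Hl : (l <= e - 1)%N) (Hmn : (n <= m)%N)
  (Phi : 'M[F]_(n, m)) (Hspan : \rank Phi = n) (c : F) :
  [<-> Phi *m gdagger p l Phi = c%:M ;
       let G := gdagger p l Phi *m Phi in G *m G = c *: G ;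
       forall x y : 'cV[F]_n,
         ginner p l (gdagger p (e - l) Phi *m x) (gdagger p l Phi *m y)
         = c * ginner p l x y].
Proof.
have le_l_e : (l <= e)%N by rewrite (leq_trans Hl) ?leq_subr.
have freePhi : row_free Phi by rewrite /row_free Hspan.
have tight_gram := sqr_mulmx_eq_scale_iff c freePhi
                     (row_free_trmx_gdagger Hchar l freePhi).
have tight_ginner := tight_frame_ginner_iff Hchar Hcard le_l_e Phi c.
by tfae=> [/tight_gram | /tight_gram/tight_ginner | /tight_ginner].
Qed.
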